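(* Let $(G,\eta\colon M\otimes G\to G)$ be an initial algebra of the endofunctor $M\otimes-$ on $\mathsf{SquaMS}$, let $Q=C(G)$ be its Cauchy completion, and let $\gamma\colon Q\to M\otimes Q$ be the composite of $C(\eta^{-1})\colon C(G)\to C(M\otimes G)$ with the canonical isometric isomorphism $C(M\otimes G)\cong M\otimes C(G)$. Then the metric space $Q$ is bilipschitz equivalent to the Sierpinski carpet $\mathbb{S}$, viewed as a subset of the plane with the taxicab metric, and thus also with the Euclidean metric.
   Context: Let $M_0=\{(r,s)\in[0,1]^2: r\in\{0,1\}\text{ or } s\in\{0,1\}\}$ be the boundary of the unit square. A square metric space is a pair $(X,S_X)$ where $X$ is a metric space with all distances at most $2$ and $S_X\colon M_0\to X$ is injective, such that (sq1) for $i\in\{0,1\}$ and $r,s\in[0,1]$, $d_X(S_X(i,r),S_X(i,s))=|s-r|$ and $d_X(S_X(r,i),S_X(s,i))=|s-r|$; (sq2) for all $(r,s),(t,u)\in M_0$, $d_X(S_X(r,s),S_X(t,u))\ge |r-t|+|s-u|$. $\mathsf{SquaMS}$ is the category of square metric spaces whose morphisms are short (non-expanding) maps $f\colon X\to Y$ with $f\circ S_X=S_Y$. Let $N=\{0,1,2\}^2$ and $M=N\setminus\{(1,1)\}$, elements viewed also as points of $\mathbb{R}^2$. For $X$ in $\mathsf{SquaMS}$, let $\sim$ be the equivalence relation on $M\times X$ generated by $(m,S_X(p))\sim(n,S_X(q))$ whenever $m,n\in M$ differ by exactly $1$ in exactly one coordinate and $(m+p)/3=(n+q)/3$ in $\mathbb{R}^2$.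 Then $M\otimes X=(M\times X)/\!\sim$, with $m\otimes x$ the class of $(m,x)$. On $M\times X$ put $d((a,u),(b,v))=\frac13 d_X(u,v)$ if $a=b$ and $2$ otherwise; the metric on $M\otimes X$ is the quotient metric: $d(m\otimes x,n\otimes y)$ is the infimum, over finite sequences $(m,x)=z_0,z_1,\dots,z_k=(n,y)$ in $M\times X$, of the sum over consecutive pairs of $0$ if the pair is $\sim$-related and of $d(z_i,z_{i+1})$ otherwise. $S_{M\otimes X}(p)=m\otimes S_X(3p-m)$ for any $m\in M$ with $p\in (m+[0,1]^2)/3$, and for a morphism $f$, $(M\otimes f)(m\otimes x)=m\otimes f(x)$; this defines an endofunctor $M\otimes-$ of $\mathsf{SquaMS}$. Cauchy completion $C(X)$: Cauchy sequences modulo equivalence, $d((x_i),(y_i))=\lim d_X(x_i,y_i)$, with $S_{C(X)}(p)$ the class of the constant sequence $S_X(p)$. The Sierpinski carpet $\mathbb{S}$ is the unique nonempty compact subset $K$ of $[0,1]^2$ with $K=\bigcup_{m\in M}\frac13(m+K)$. Two metric spaces $A,B$ are bilipschitz equivalent if there is a bijection $f\colon A\to B$ and $K\ge1$ with $\frac1K d_A(x,y)\le d_B(f(x),f(y))\le K d_A(x,y)$ for all $x,y$. *)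

From Stdlib Require Import Reals Lra List Relations ClassicalEpsilon.
From Coquelicot Require Import Coquelicot.
Open Scope R_scope.

Definition is_metric {X : Type} (d : X -> X -> R) : Prop :=
  (forall x y, 0 <= d x y) /\
  (forall x y, d x y = 0 <-> x = y) /\
  (forall x y, d x y = d y x) /\
  (forall x y z, d x z <= d x y + d y z).

Definition bilipschitz {A B : Type} (dA : A -> A -> R) (dB : B -> B -> R) : Prop :=
  exists (f : A -> B) (K : R),
    1 <= K /\
    (forall x y, f x = f y -> x = y) /\ (forall b, exists a, f a = b) /\
    (forall x y, / K * dA x y <= dB (f x) (f y) /\ dB (f x) (f y) <= K * dA x y).

Definition quot {T : Type} (E : T -> T -> Prop) : Type :=
  { P : T -> Prop | exists t, P = E t }.
Definition cls {T : Type} (E : T -> T -> Prop) (t : T) : quot E :=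
  exist _ (E t) (ex_intro _ t eq_refl).
Definition rep {T : Type} {E : T -> T -> Prop} (q : quot E) : T :=
  proj1_sig (constructive_indefinite_description _ (proj2_sig q)).

Definition inM0 (p : R * R) : Prop :=
  0 <= fst p <= 1 /\ 0 <= snd p <= 1 /\
  (fst p = 0 \/ fst p = 1 \/ snd p = 0 \/ snd p = 1).

(* S_X is given as a total map R*R -> X; only its values on M0 matter. *)
Record SqMS := {
  sq_car :> Type;
  sq_d : sq_car -> sq_car -> R;
  sq_S : R * R -> sq_car;
  sq_metric : is_metric sq_d;
  sq_bound : forall x y, sq_d x y <= 2;
  sq_inj : forall p q, inM0 p -> inM0 q -> sq_S p = sq_S q -> p = q;
  sq1 : forall i r s, (i = 0 \/ i = 1) -> 0 <= r <= 1 -> 0 <= s <= 1 ->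
          sq_d (sq_S (i, r)) (sq_S (i, s)) = Rabs (s - r) /\
          sq_d (sq_S (r, i)) (sq_S (s, i)) = Rabs (s - r);
  sq2 : forall p q, inM0 p -> inM0 q ->
          Rabs (fst p - fst q) + Rabs (snd p - snd q) <= sq_d (sq_S p) (sq_S q)
}.

Definition is_mor (X Y : SqMS) (f : X -> Y) : Prop :=
  (forall x y, sq_d Y (f x) (f y) <= sq_d X x y) /\
  (forall p, inM0 p -> f (sq_S X p) = sq_S Y p).

Inductive Mpt := M00 | M01 | M02 | M10 | M12 | M20 | M21 | M22.
Definition mx (m : Mpt) : R :=
  match m with M00 | M01 | M02 => 0 | M10 | M12 => 1 | _ => 2 end.
Definition my (m : Mpt) : R :=
  match m with M00 | M10 | M20 => 0 | M01 | M21 => 1 | _ => 2 end.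

Definition adjacent (m n : Mpt) : Prop :=
  (mx m = mx n /\ Rabs (my m - my n) = 1) \/
  (my m = my n /\ Rabs (mx m - mx n) = 1).

Definition Mpt_eq_dec (a b : Mpt) : {a = b} + {a <> b}.
Proof. decide equality. Defined.

Section Tensor.
Variable X : SqMS.

Definition tgen (z w : Mpt * X) : Prop :=
  adjacent (fst z) (fst w) /\
  exists p q, inM0 p /\ inM0 q /\ snd z = sq_S X p /\ snd w = sq_S X q /\
    (mx (fst z) + fst p) / 3 = (mx (fst w) + fst q) / 3 /\
    (my (fst z) + snd p) / 3 = (my (fst w) + snd q) / 3.

Definition trel : Mpt * X -> Mpt * X -> Prop := clos_refl_sym_trans _ tgen.

Definition pdist (z w : Mpt * X) : R :=
  if Mpt_eq_dec (fst z) (fst w) then sq_d X (snd z) (snd w) / 3 else 2.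

Definition step_cost (z w : Mpt * X) : R :=
  match excluded_middle_informative (trel z w) with
  | left _ => 0 | right _ => pdist z w end.

Fixpoint chain_cost (z : Mpt * X) (l : list (Mpt * X)) : R :=
  match l with nil => 0 | w :: l' => step_cost z w + chain_cost w l' end.

Definition qdist (z w : Mpt * X) : R :=
  real (Glb_Rbar (fun c => exists l, last l z = w /\ c = chain_cost z l)).

Definition tens : Type := quot trel.
Definition tcls (m : Mpt) (x : X) : tens := cls trel (m, x).
Definition tdist (a b : tens) : R := qdist (rep a) (rep b).
End Tensor.

Definition in_sub (m : Mpt) (p : R * R) : Prop :=
  mx m <= 3 * fst p <= mx m + 1 /\ my m <= 3 * snd p <= my m + 1.

(* eta : M (x) X -> X is a morphism of SquaMS, i.e. an (M(x)-)-algebra;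
   S_{M(x)X}(p) = m (x) S_X(3p - m) for any m with p in (m+[0,1]^2)/3 *)
Definition is_alg (X : SqMS) (eta : tens X -> X) : Prop :=
  (forall a b, sq_d X (eta a) (eta b) <= tdist X a b) /\
  (forall p m, inM0 p -> in_sub m p ->
     eta (tcls X m (sq_S X (3 * fst p - mx m, 3 * snd p - my m))) = sq_S X p).

(* algebra morphism f : (X,eta) -> (Y,etaY): f o eta = etaY o (M (x) f),
   where (M (x) f)(m (x) x) = m (x) f(x) *)
Definition is_alg_mor (X Y : SqMS) (eta : tens X -> X) (etaY : tens Y -> Y)
  (f : X -> Y) : Prop :=
  is_mor X Y f /\ forall m x, f (eta (tcls X m x)) = etaY (tcls Y m (f x)).

Definition is_initial_algebra (G : SqMS) (eta : tens G -> G) : Prop :=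
  is_alg G eta /\
  forall (Y : SqMS) (etaY : tens Y -> Y), is_alg Y etaY ->
    exists f : G -> Y, is_alg_mor G Y eta etaY f /\
      forall g : G -> Y, is_alg_mor G Y eta etaY g -> forall x, g x = f x.

Section Completion.
Variable X : SqMS.
Definition cauchy (s : nat -> X) : Prop :=
  forall eps, 0 < eps -> exists N, forall i j, (N <= i)%nat -> (N <= j)%nat ->
    sq_d X (s i) (s j) < eps.
Definition CSeq : Type := { s : nat -> X | cauchy s }.
Definition cequiv (s t : CSeq) : Prop :=
  is_lim_seq (fun i => sq_d X (proj1_sig s i) (proj1_sig t i)) 0.
Definition compl : Type := quot cequiv.
Definition cdist (a b : compl) : R :=
  real (Lim_seq (fun i => sq_d X (proj1_sig (rep a) i) (proj1_sig (rep b) i))).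
End Completion.

Definition eucl (p q : R * R) : R :=
  sqrt ((fst p - fst q) ^ 2 + (snd p - snd q) ^ 2).
Definition taxi (p q : R * R) : R :=
  Rabs (fst p - fst q) + Rabs (snd p - snd q).
Definition open2 (U : R * R -> Prop) : Prop :=
  forall p, U p -> exists e, 0 < e /\ forall q, eucl p q < e -> U q.
Definition compact2 (K : R * R -> Prop) : Prop :=
  forall (I : Type) (U : I -> R * R -> Prop), (forall i, open2 (U i)) ->
    (forall p, K p -> exists i, U i p) ->
    exists l : list I, forall p, K p -> exists i, In i l /\ U i p.
Definition is_carpet (K : R * R -> Prop) : Prop :=
  (forall p, K p -> 0 <= fst p <= 1 /\ 0 <= snd p <= 1) /\
  (exists p, K p) /\ compact2 K /\
  (forall p, K p <-> exists m q, K q /\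
       p = ((mx m + fst q) / 3, (my m + snd q) / 3)).
Definition carpet_taxi (K : R * R -> Prop) (p q : {p | K p}) : R :=
  taxi (proj1_sig p) (proj1_sig q).
Definition carpet_eucl (K : R * R -> Prop) (p q : {p | K p}) : R :=
  eucl (proj1_sig p) (proj1_sig q).

From Pilot Require Import Defs.
From Stdlib Require Import Reals Lra Lia List Relations ClassicalEpsilon
  ProofIrrelevance FunctionalExtensionality PropExtensionality.
From Coquelicot Require Import Coquelicot.
Open Scope R_scope.

(* The carpet S, with the taxicab metric, is itself an algebra for M ⊗ -, so
   initiality gives a short algebra map g : G -> S with g (m ⊗ x) = (m + g x)/3.
   Initiality also forces η to be onto (its image is a subalgebra), so every
   x ∈ G can be written η(w_1 ⊗ η(w_2 ⊗ ... η(w_k ⊗ z))) for every k.  If g x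
   and g y are closer than 3^-k, these level-k cells share a corner, and the
   gluing relation identifies the copies of that corner in both cells; as η
   contracts by 3 at each level, d(x, y) <= 4·3^-k, hence d <= 12 · taxi ∘ g.
   So g is bilipschitz onto a dense subset of the closed set S, and extends to
   a bilipschitz bijection from the completion of G onto S.  The Euclidean
   statement follows since the two metrics are equivalent. *)

(** * The quotient metric on M ⊗ X *)

Section Quotient.
Context {T : Type} (E : T -> T -> Prop).

Lemma cls_rep (q : quot E) : q = cls E (rep q).
Proof.
  destruct q as [P h]. unfold rep, cls; simpl.
  destruct (constructive_indefinite_description _ h) as [t Ht]; simpl.
  subst P. f_equal. apply proof_irrelevance.
Qed.

Hypothesis E_equiv : equivalence T E.

Lemma rep_cls (t : T) : E t (rep (cls E t)).
Proof.
  unfold rep, cls; simpl.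
  destruct (constructive_indefinite_description _ _) as [u Hu]; simpl.
  rewrite Hu. apply E_equiv.
Qed.

Lemma cls_eq (s t : T) : E s t -> cls E s = cls E t.
Proof.
  intros Hst. unfold cls.
  assert (HE : E s = E t).
  { apply functional_extensionality; intro u; apply propositional_extensionality.
    destruct E_equiv as [_ Etrans Esym]. split; eauto. }
  generalize (ex_intro (fun t0 : T => E s = E t0) s eq_refl).
  generalize (ex_intro (fun t0 : T => E t = E t0) t eq_refl).
  rewrite HE. intros. f_equal; apply proof_irrelevance.
Qed.

End Quotient.

Lemma sig_eq {A} {P : A -> Prop} (x y : sig P) : proj1_sig x = proj1_sig y -> x = y.
Proof. destruct x, y; simpl; intros ->; f_equal; apply proof_irrelevance. Qed.

Lemma last_cons {A} (a d : A) l : last (a :: l) d = last l a.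
Proof.
  revert a d; induction l as [|b l IH]; intros a d. reflexivity.
  change (last (b :: l) d = last (b :: l) a). rewrite !IH. reflexivity.
Qed.

Lemma last_app {A} (l1 l2 : list A) z : last (l1 ++ l2) z = last l2 (last l1 z).
Proof.
  revert z; induction l1 as [|a l1 IH]; intros z. reflexivity.
  change (last (a :: (l1 ++ l2)) z = last l2 (last (a :: l1) z)).
  rewrite !last_cons. apply IH.
Qed.

Section SqMSMetric.
Variable X : SqMS.

Lemma sq_d_ge0 (x y : X) : 0 <= sq_d X x y.
Proof. apply (proj1 (sq_metric X)). Qed.
Lemma sq_d_refl (x : X) : sq_d X x x = 0.
Proof. now apply (proj1 (proj2 (sq_metric X))). Qed.
Lemma sq_d_eq0 (x y : X) : sq_d X x y = 0 -> x = y.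
Proof. apply (proj1 (proj2 (sq_metric X))). Qed.
Lemma sq_d_sym (x y : X) : sq_d X x y = sq_d X y x.
Proof. apply (proj1 (proj2 (proj2 (sq_metric X)))). Qed.
Lemma sq_d_triangle (x y z : X) : sq_d X x z <= sq_d X x y + sq_d X y z.
Proof. apply (proj2 (proj2 (proj2 (sq_metric X)))). Qed.

End SqMSMetric.

Section TensorMetric.
Variable X : SqMS.

Lemma trel_equiv : equivalence _ (trel X).
Proof. apply clos_rst_is_equiv. Qed.

Lemma tcls_eq z w : trel X z w -> cls (trel X) z = cls (trel X) w.
Proof. apply cls_eq, trel_equiv. Qed.

Lemma trel_rep z : trel X z (rep (cls (trel X) z)).
Proof. apply rep_cls, trel_equiv. Qed.

Lemma step_cost_bounds z w : 0 <= step_cost X z w <= pdist X z w.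
Proof.
  assert (0 <= pdist X z w).
  { unfold pdist. destruct Mpt_eq_dec; [pose proof (sq_d_ge0 X (snd z) (snd w))|]; lra. }
  unfold step_cost. destruct excluded_middle_informative; lra.
Qed.

Lemma step_cost_trel z w : trel X z w -> step_cost X z w = 0.
Proof. unfold step_cost. destruct excluded_middle_informative; tauto. Qed.

Lemma chain_cost_ge0 z l : 0 <= chain_cost X z l.
Proof.
  revert z; induction l as [|w l IH]; intros z; simpl. lra.
  pose proof (step_cost_bounds z w). specialize (IH w). lra.
Qed.

Lemma chain_cost_app z l1 l2 :
  chain_cost X z (l1 ++ l2) = chain_cost X z l1 + chain_cost X (last l1 z) l2.
Proof.
  revert z; induction l1 as [|w l1 IH]; intros z. simpl; lra.
  rewrite last_cons. simpl. rewrite IH. lra.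
Qed.

Lemma qdist_is_glb z w :
  is_glb_Rbar (fun c => exists l, last l z = w /\ c = chain_cost X z l)
    (Finite (qdist X z w)).
Proof.
  unfold qdist. set (chains := fun c => exists l, last l z = w /\ c = chain_cost X z l).
  assert (HG := Glb_Rbar_correct chains).
  assert (Hlb : is_lb_Rbar chains (Finite 0)).
  { intros c [l [_ ->]]. apply chain_cost_ge0. }
  assert (Hc : chains (chain_cost X z (w :: nil))) by (exists (w :: nil); auto).
  destruct (Glb_Rbar chains) eqn:E.
  - exact HG.
  - destruct HG as [H1 _]. now specialize (H1 _ Hc).
  - destruct HG as [_ H2]. now specialize (H2 _ Hlb).
Qed.

Lemma qdist_le_chain_cost z l : qdist X z (last l z) <= chain_cost X z l.
Proof. apply (proj1 (qdist_is_glb z (last l z))). now exists l. Qed.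

Lemma qdist_ge z w L :
  (forall l, last l z = w -> L <= chain_cost X z l) -> L <= qdist X z w.
Proof.
  intros H. apply (proj2 (qdist_is_glb z w) (Finite L)).
  intros c [l [Hl ->]]. simpl. auto.
Qed.

Lemma qdist_triangle z w u : qdist X z u <= qdist X z w + qdist X w u.
Proof.
  assert (Hmid : qdist X z u - qdist X z w <= qdist X w u).
  { apply qdist_ge. intros l2 H2.
    enough (qdist X z u - chain_cost X w l2 <= qdist X z w) by lra.
    apply qdist_ge. intros l1 H1.
    pose proof (qdist_le_chain_cost z (l1 ++ l2)) as H.
    rewrite chain_cost_app, last_app, H1, H2 in H. lra. }
  lra.
Qed.

Lemma qdist_trel_le z z' w w' :
  trel X z z' -> trel X w w' -> qdist X z w <= qdist X z' w'.
Proof.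
  intros Hz Hw. apply qdist_ge. intros l Hl.
  pose proof (qdist_le_chain_cost z (z' :: l ++ w :: nil)) as H.
  rewrite last_cons, last_last in H. simpl in H.
  rewrite chain_cost_app, Hl in H. simpl in H.
  rewrite (step_cost_trel _ _ Hz), (step_cost_trel w' w) in H
    by now apply trel_equiv.
  lra.
Qed.

Lemma tdist_cls z w : tdist X (cls (trel X) z) (cls (trel X) w) = qdist X z w.
Proof.
  unfold tdist. apply Rle_antisym; apply qdist_trel_le;
    try apply trel_rep; apply trel_equiv, trel_rep.
Qed.

Lemma tdist_tcls_same m x y : tdist X (tcls X m x) (tcls X m y) <= sq_d X x y / 3.
Proof.
  unfold tcls. rewrite tdist_cls.
  eapply Rle_trans. apply (qdist_le_chain_cost _ ((m, y) :: nil)).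
  simpl. pose proof (step_cost_bounds (m, x) (m, y)) as H.
  unfold pdist in H. simpl in H. destruct Mpt_eq_dec; [lra | congruence].
Qed.

Lemma le_qdist (D : Mpt * X -> Mpt * X -> R) :
  (forall z, D z z <= 0) -> (forall z w u, D z u <= D z w + D w u) ->
  (forall z w, D z w <= step_cost X z w) -> forall z w, D z w <= qdist X z w.
Proof.
  intros Hrefl Htri Hstep z w. apply qdist_ge. intros l. revert z.
  induction l as [|u l IH]; intros z Hl.
  - simpl in *. subst. auto.
  - rewrite last_cons in Hl. simpl. specialize (IH u Hl).
    specialize (Htri z u w). specialize (Hstep z u). lra.
Qed.

End TensorMetric.

Section TensorMap.
Variables (X Y : SqMS) (f : X -> Y).
Hypothesis f_S : forall p, inM0 p -> f (sq_S X p) = sq_S Y p.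

Definition tmap (z : Mpt * X) : Mpt * Y := (fst z, f (snd z)).

Lemma trel_tmap z w : trel X z w -> trel Y (tmap z) (tmap w).
Proof.
  induction 1 as [z w Hzw | | |]; try (econstructor; eauto; fail).
  apply rst_step. destruct Hzw as [Ha [p [q [Hp [Hq [Hz [Hw E]]]]]]].
  split; auto. exists p, q. unfold tmap; simpl. rewrite Hz, Hw, !f_S by auto. tauto.
Qed.

Hypothesis f_short : forall x y, sq_d Y (f x) (f y) <= sq_d X x y.

Lemma qdist_tmap z w : qdist Y (tmap z) (tmap w) <= qdist X z w.
Proof.
  apply (le_qdist X (fun z w => qdist Y (tmap z) (tmap w))).
  - intros u. apply (qdist_le_chain_cost Y _ nil).
  - intros. apply qdist_triangle.
  - intros u v. eapply Rle_trans. apply (qdist_le_chain_cost Y _ (tmap v :: nil)).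
    simpl. rewrite Rplus_0_r. unfold step_cost at 2.
    destruct excluded_middle_informative as [h|h].
    + rewrite step_cost_trel by (apply trel_tmap; auto). lra.
    + eapply Rle_trans. apply step_cost_bounds.
      unfold pdist, tmap; simpl. destruct Mpt_eq_dec; [|lra].
      pose proof (f_short (snd u) (snd v)). lra.
Qed.

End TensorMap.

(** * Cells of the unit square *)

Ltac solve_M0 :=
  repeat split; try lra;
  first [left; lra | right; left; lra | right; right; left; lra | right; right; right; lra].

Definition to_cell (m : Mpt) (q : R * R) : R * R := ((mx m + fst q) / 3, (my m + snd q) / 3).
Definition from_cell (m : Mpt) (p : R * R) : R * R := (3 * fst p - mx m, 3 * snd p - my m).
Definition unit_sq (p : R * R) : Prop := 0 <= fst p <= 1 /\ 0 <= snd p <= 1.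

Lemma to_from_cell m p : to_cell m (from_cell m p) = p.
Proof. destruct p; unfold to_cell, from_cell; simpl; f_equal; field. Qed.

Lemma from_to_cell m p : from_cell m (to_cell m p) = p.
Proof. destruct p; unfold to_cell, from_cell; simpl; f_equal; field. Qed.

Lemma to_cell_inj m p q : to_cell m p = to_cell m q -> p = q.
Proof. intros E. rewrite <- (from_to_cell m p), E. apply from_to_cell. Qed.

Lemma to_cell_unit_sq m q : unit_sq q -> unit_sq (to_cell m q).
Proof. unfold unit_sq, to_cell; destruct m; simpl; intros; lra. Qed.

Lemma to_cell_in_sub m q : unit_sq q -> in_sub m (to_cell m q).
Proof. unfold unit_sq, in_sub, to_cell; simpl; intros; lra. Qed.

Lemma M0_unit_sq p : inM0 p -> unit_sq p.
Proof. unfold inM0, unit_sq; tauto. Qed.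

Lemma M0_side i r : (i = 0 \/ i = 1) -> 0 <= r <= 1 -> inM0 (i, r) /\ inM0 (r, i).
Proof. unfold inM0; simpl; intros [-> | ->] H; split; solve_M0. Qed.

Lemma M0_origin : inM0 (0, 0).
Proof. unfold inM0; simpl; solve_M0. Qed.

Lemma M0_from_cell m p : inM0 p -> in_sub m p -> inM0 (from_cell m p).
Proof.
  destruct p as [a b]; unfold inM0, in_sub, from_cell; simpl; intros H1 H2.
  destruct m; simpl in *; destruct H1 as [? [? [?|[?|[?|?]]]]]; solve_M0.
Qed.

Lemma M0_of_to_cell m q : unit_sq q -> inM0 (to_cell m q) -> inM0 q.
Proof.
  destruct q as [a b]; unfold unit_sq, inM0, to_cell; simpl; intros H1 H2.
  destruct m; simpl in *; destruct H2 as [? [? [?|[?|[?|?]]]]]; solve_M0.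
Qed.

Lemma M0_of_to_cell_eq m m' q q' : m <> m' -> unit_sq q -> unit_sq q' ->
  to_cell m q = to_cell m' q' -> inM0 q /\ inM0 q'.
Proof.
  destruct q as [a1 a2], q' as [b1 b2]; unfold unit_sq, inM0, to_cell; simpl.
  intros Hm H1 H2 E. injection E; intros E2 E1.
  destruct m, m'; try congruence; simpl in *; split; solve_M0.
Qed.

Lemma M0_in_some_cell p : inM0 p -> exists m, in_sub m p.
Proof.
  destruct p as [a b]; unfold inM0, in_sub; simpl; intros H.
  destruct (Rle_dec (3 * a) 1); [|destruct (Rle_dec (3 * a) 2)];
  (destruct (Rle_dec (3 * b) 1); [|destruct (Rle_dec (3 * b) 2)]).
  all: first [exists M00; simpl; lra | exists M01; simpl; lra | exists M02; simpl; lra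
            | exists M10; simpl; lra | exists M12; simpl; lra | exists M20; simpl; lra
            | exists M21; simpl; lra | exists M22; simpl; lra | exfalso; lra].
Qed.

Ltac rabs := unfold Rabs in *; repeat destruct Rcase_abs; try lra.

Lemma taxi_ge0 p q : 0 <= taxi p q.
Proof. unfold taxi. pose proof (Rabs_pos (fst p - fst q)); pose proof (Rabs_pos (snd p - snd q)); lra. Qed.

Lemma taxi_sym p q : taxi p q = taxi q p.
Proof. unfold taxi. now rewrite (Rabs_minus_sym (fst p)), (Rabs_minus_sym (snd p)). Qed.

Lemma taxi_triangle p q r : taxi p r <= taxi p q + taxi q r.
Proof. unfold taxi. rabs. Qed.

Lemma taxi_refl p : taxi p p = 0.
Proof. unfold taxi. rewrite !Rminus_diag, Rabs_R0. lra. Qed.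

Lemma taxi_eq0 p q : taxi p q = 0 -> p = q.
Proof. destruct p as [a b], q as [c d]; unfold taxi; simpl; intros H. f_equal; rabs. Qed.

Lemma taxi_fst p q : Rabs (fst p - fst q) <= taxi p q.
Proof. unfold taxi. pose proof (Rabs_pos (snd p - snd q)). lra. Qed.

Lemma taxi_snd p q : Rabs (snd p - snd q) <= taxi p q.
Proof. unfold taxi. pose proof (Rabs_pos (fst p - fst q)). lra. Qed.

Lemma taxi_unit_sq p q : unit_sq p -> unit_sq q -> taxi p q <= 2.
Proof. unfold unit_sq, taxi. intros. rabs. Qed.

Lemma taxi_to_cell m p q : taxi (to_cell m p) (to_cell m q) = taxi p q / 3.
Proof. unfold taxi, to_cell; simpl. rabs. Qed.

Lemma eucl_le_taxi p q : eucl p q <= taxi p q.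
Proof.
  unfold eucl, taxi. set (a := fst p - fst q). set (b := snd p - snd q).
  pose proof (Rabs_pos a); pose proof (Rabs_pos b).
  rewrite <- (sqrt_pow2 (Rabs a + Rabs b)) by lra.
  apply sqrt_le_1_alt.
  assert (Rabs a * Rabs a = a * a) by (rabs; nra).
  assert (Rabs b * Rabs b = b * b) by (rabs; nra).
  simpl. nra.
Qed.

Lemma taxi_le_eucl p q : taxi p q <= 2 * eucl p q.
Proof.
  assert (Habs : forall a b, Rabs a <= sqrt (a ^ 2 + b ^ 2)).
  { intros a b. rewrite <- sqrt_Rsqr_abs. apply sqrt_le_1_alt. unfold Rsqr. simpl. nra. }
  unfold eucl, taxi. pose proof (Habs (fst p - fst q) (snd p - snd q)).
  pose proof (Habs (snd p - snd q) (fst p - fst q)). rewrite Rplus_comm in H0. lra.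
Qed.

Lemma pow3_pos n : 0 < 3 ^ n.
Proof. apply pow_lt; lra. Qed.

Lemma pow3_small C eps : 0 < eps -> exists n, C / 3 ^ n < eps.
Proof.
  intros He. destruct (INR_archimed eps C He) as [n Hn]. exists n.
  assert (Hlt : forall k, INR k < 3 ^ k).
  { induction k as [|k IH]. simpl; lra.
    rewrite S_INR. simpl. assert (1 <= 3 ^ k) by (apply pow_R1_Rle; lra). lra. }
  pose proof (Hlt n). pose proof (pow3_pos n).
  apply (Rmult_lt_reg_r (3 ^ n)); auto. unfold Rdiv. rewrite Rmult_assoc, Rinv_l by lra. nra.
Qed.

Definition self_similar (A : R * R -> Prop) : Prop :=
  forall a, A a -> exists m a', A a' /\ unit_sq a' /\ a = to_cell m a'.

Lemma self_similar_dense (A B : R * R -> Prop) :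
  self_similar A -> (forall b, B b -> unit_sq b) -> (exists b, B b) ->
  (forall m b, B b -> B (to_cell m b)) ->
  forall a eps, A a -> 0 < eps -> exists b, B b /\ taxi b a < eps.
Proof.
  intros HA HB [b0 Hb0] HBcell a eps Ha Heps.
  assert (Happrox : forall n a, A a -> exists b, B b /\ taxi b a <= 2 / 3 ^ n).
  { induction n as [|n IH]; intros a' Ha'; destruct (HA a' Ha') as [m [a'' [Ha'' [Hsq ->]]]].
    - exists b0. split; auto. replace (2 / 3 ^ 0) with 2 by (simpl; field).
      apply taxi_unit_sq; auto using to_cell_unit_sq.
    - destruct (IH a'' Ha'') as [b [Hb Hba]]. exists (to_cell m b). split; auto.
      rewrite taxi_to_cell. simpl. pose proof (pow3_pos n).
      replace (2 / (3 * 3 ^ n)) with (2 / 3 ^ n / 3) by (field; lra). lra. }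
  destruct (pow3_small 2 eps Heps) as [n Hn].
  destruct (Happrox n a Ha) as [b [Hb Hba]]. exists b. split; auto. lra.
Qed.

Lemma M0_self_similar : self_similar inM0.
Proof.
  intros p Hp. destruct (M0_in_some_cell p Hp) as [m Hm].
  exists m, (from_cell m p). pose proof (M0_from_cell m p Hp Hm).
  split; [|split]; auto using M0_unit_sq. now rewrite to_from_cell.
Qed.

(* If b ∉ K, the open sets {q | taxi q b > 1/(n+1)} cover K, and a finite
   subcover keeps K at positive distance from b. *)
Lemma compact2_closed (K : R * R -> Prop) b : compact2 K ->
  (forall eps, 0 < eps -> exists q, K q /\ taxi q b < eps) -> K b.
Proof.
  intros Hc Happrox. destruct (classic (K b)) as [|Hnb]; auto. exfalso.
  destruct (Hc nat (fun n q => / INR (S n) < taxi q b)) as [l Hl].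
  - intros n p Hp. exists ((taxi p b - / INR (S n)) / 2). split. lra.
    intros q Hq. pose proof (taxi_le_eucl p q). pose proof (taxi_triangle p q b). lra.
  - intros p Hp. assert (Hpos : 0 < taxi p b).
    { destruct (Rle_lt_or_eq_dec 0 (taxi p b) (taxi_ge0 p b)) as [|E]; auto.
      symmetry in E. apply taxi_eq0 in E. subst. contradiction. }
    destruct (INR_archimed (taxi p b) 1 Hpos) as [n Hn]. exists n.
    rewrite S_INR. pose proof (pos_INR n).
    apply (Rmult_lt_reg_r (INR n + 1)). lra. rewrite Rinv_l by lra. nra.
  - set (N := list_max l).
    assert (HN : forall i, In i l -> (i <= N)%nat).
    { intros i Hi. assert (HH := proj1 (list_max_le l N) (le_n _)).
      rewrite Forall_forall in HH. auto. }
    assert (Hp : 0 < / INR (S N)) by (apply Rinv_0_lt_compat, lt_0_INR; lia).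
    destruct (Happrox _ Hp) as [q [Hq Hqb]].
    destruct (Hl q Hq) as [i [Hi Hiq]].
    assert (/ INR (S N) <= / INR (S i)).
    { apply Rinv_le_contravar. apply lt_0_INR; lia. apply le_INR. specialize (HN i Hi). lia. }
    lra.
Qed.

(** * The structure map of an initial algebra is onto *)

Section EtaSurjective.
Variables (G : SqMS) (eta : tens G -> G).
Hypothesis G_initial : is_initial_algebra G eta.

Let G_alg : is_alg G eta := proj1 G_initial.

Definition in_eta_image (x : G) : Prop := exists m z, x = eta (tcls G m z).

Lemma S_in_eta_image p : inM0 p -> in_eta_image (sq_S G p).
Proof.
  intros Hp. destruct (M0_in_some_cell p Hp) as [m Hm].
  exists m, (sq_S G (from_cell m p)). symmetry. now apply G_alg.
Qed.

Definition image_car : Type := {x : G | in_eta_image x}.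

(* Off M0 the point S(p) is irrelevant; any point of the image will do. *)
Definition image_S (q : R * R) : image_car :=
  match excluded_middle_informative (inM0 q) with
  | left h => exist _ (sq_S G q) (S_in_eta_image q h)
  | right _ => exist _ (sq_S G (0, 0)) (S_in_eta_image _ M0_origin)
  end.

Lemma image_S_val q : inM0 q -> proj1_sig (image_S q) = sq_S G q.
Proof. intros h. unfold image_S. destruct excluded_middle_informative; simpl; tauto. Qed.

Definition image_d (x y : image_car) : R := sq_d G (proj1_sig x) (proj1_sig y).

Lemma image_d_metric : is_metric image_d.
Proof.
  unfold image_d. repeat split; intros.
  - apply sq_d_ge0.
  - now apply sig_eq, sq_d_eq0.
  - subst. apply sq_d_refl.
  - apply sq_d_sym.
  - apply sq_d_triangle.
Qed.

Lemma image_d_bound x y : image_d x y <= 2.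
Proof. apply sq_bound. Qed.

Lemma image_S_inj p q : inM0 p -> inM0 q -> image_S p = image_S q -> p = q.
Proof.
  intros Hp Hq H. apply (sq_inj G); auto.
  rewrite <- (image_S_val p), <- (image_S_val q) by auto. congruence.
Qed.

Lemma image_S_sq1 i r s : (i = 0 \/ i = 1) -> 0 <= r <= 1 -> 0 <= s <= 1 ->
  image_d (image_S (i, r)) (image_S (i, s)) = Rabs (s - r) /\
  image_d (image_S (r, i)) (image_S (s, i)) = Rabs (s - r).
Proof.
  intros Hi Hr Hs. destruct (M0_side i r Hi Hr), (M0_side i s Hi Hs).
  unfold image_d. rewrite !image_S_val by auto. now apply (sq1 G).
Qed.

Lemma image_S_sq2 p q : inM0 p -> inM0 q ->
  Rabs (fst p - fst q) + Rabs (snd p - snd q) <= image_d (image_S p) (image_S q).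
Proof. intros. unfold image_d. rewrite !image_S_val by auto. now apply (sq2 G). Qed.

Definition eta_image : SqMS :=
  Build_SqMS image_car image_d image_S image_d_metric image_d_bound
    image_S_inj image_S_sq1 image_S_sq2.

Let incl (x : eta_image) : G := proj1_sig x.

Definition image_eta (a : tens eta_image) : eta_image :=
  let z := rep a in
  exist _ (eta (cls (trel G) (tmap _ _ incl z)))
    (ex_intro _ (fst z) (ex_intro _ (incl (snd z)) eq_refl)).

Lemma incl_S p : inM0 p -> incl (sq_S eta_image p) = sq_S G p.
Proof. apply image_S_val. Qed.

Lemma incl_image_eta m x : incl (image_eta (tcls eta_image m x)) = eta (tcls G m (incl x)).
Proof.
  unfold image_eta, incl at 1; simpl. f_equal. symmetry.
  apply tcls_eq, (trel_tmap _ _ incl incl_S (m, x)), trel_rep.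
Qed.

Lemma image_eta_alg : is_alg eta_image image_eta.
Proof.
  split.
  - intros a b. unfold image_eta; simpl; unfold image_d; simpl.
    eapply Rle_trans. apply G_alg.
    rewrite tdist_cls. apply qdist_tmap; [apply incl_S | intros; apply Rle_refl].
  - intros p m Hp Hm. apply sig_eq. fold (incl (sq_S eta_image p)).
    pose proof (M0_from_cell m p Hp Hm) as Hc.
    rewrite incl_image_eta, !incl_S by assumption. now apply G_alg.
Qed.

Theorem eta_surjective (x : G) : in_eta_image x.
Proof.
  destruct (proj2 G_initial eta_image image_eta image_eta_alg) as [f [[[f_short f_S] f_eta] _]].
  destruct (proj2 G_initial G eta G_alg) as [id_G [_ id_unique]].
  assert (H_incl_f : is_alg_mor G G eta eta (fun x => incl (f x))).
  { repeat split.
    - intros; apply f_short.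
    - intros p Hp. rewrite f_S by auto. now apply incl_S.
    - intros m y. now rewrite f_eta, incl_image_eta. }
  assert (H_id : is_alg_mor G G eta eta (fun x => x)).
  { repeat split; intros; auto using Rle_refl. }
  replace x with (incl (f x)) by now rewrite (id_unique _ H_incl_f), (id_unique _ H_id).
  apply (proj2_sig (f x)).
Qed.

End EtaSurjective.

(** * The carpet as an algebra *)

Section CarpetAlgebra.
Variable K : R * R -> Prop.
Hypothesis K_carpet : is_carpet K.

Lemma carpet_unit_sq p : K p -> unit_sq p.
Proof. apply K_carpet. Qed.

Lemma carpet_to_cell m q : K q -> K (to_cell m q).
Proof. intros H. apply (proj2 (proj2 (proj2 K_carpet))). now exists m, q. Qed.

Lemma carpet_self_similar : self_similar K.
Proof.
  intros p Hp. apply K_carpet in Hp as [m [q [Hq ->]]].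
  exists m, q. auto using carpet_unit_sq.
Qed.

Lemma carpet_closed b : (forall eps, 0 < eps -> exists q, K q /\ taxi q b < eps) -> K b.
Proof. apply compact2_closed, K_carpet. Qed.

Lemma M0_carpet b : inM0 b -> K b.
Proof.
  intros Hb. apply carpet_closed. intros eps He.
  apply (self_similar_dense inM0 K); auto using M0_self_similar, carpet_unit_sq, carpet_to_cell.
  apply K_carpet.
Qed.

Definition carpet_S (q : R * R) : {p | K p} :=
  match excluded_middle_informative (K q) with
  | left h => exist _ q h
  | right _ => exist _ (0, 0) (M0_carpet _ M0_origin)
  end.

Lemma carpet_S_val q : inM0 q -> proj1_sig (carpet_S q) = q.
Proof.
  intros Hq. unfold carpet_S. destruct excluded_middle_informative as [|h]; auto.
  now apply M0_carpet in Hq.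
Qed.

Lemma carpet_taxi_metric : is_metric (carpet_taxi K).
Proof.
  unfold carpet_taxi. repeat split; intros.
  - apply taxi_ge0.
  - now apply sig_eq, taxi_eq0.
  - subst. apply taxi_refl.
  - apply taxi_sym.
  - apply taxi_triangle.
Qed.

Lemma carpet_taxi_bound x y : carpet_taxi K x y <= 2.
Proof. apply taxi_unit_sq; apply carpet_unit_sq, proj2_sig. Qed.

Lemma carpet_S_inj p q : inM0 p -> inM0 q -> carpet_S p = carpet_S q -> p = q.
Proof. intros Hp Hq H. rewrite <- (carpet_S_val p), <- (carpet_S_val q) by auto. congruence. Qed.

Lemma carpet_S_sq1 i r s : (i = 0 \/ i = 1) -> 0 <= r <= 1 -> 0 <= s <= 1 ->
  carpet_taxi K (carpet_S (i, r)) (carpet_S (i, s)) = Rabs (s - r) /\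
  carpet_taxi K (carpet_S (r, i)) (carpet_S (s, i)) = Rabs (s - r).
Proof.
  intros Hi Hr Hs. destruct (M0_side i r Hi Hr), (M0_side i s Hi Hs).
  unfold carpet_taxi, taxi. rewrite !carpet_S_val by auto. simpl.
  rewrite !Rminus_diag, Rabs_R0, (Rabs_minus_sym r). split; lra.
Qed.

Lemma carpet_S_sq2 p q : inM0 p -> inM0 q ->
  Rabs (fst p - fst q) + Rabs (snd p - snd q) <= carpet_taxi K (carpet_S p) (carpet_S q).
Proof. intros. unfold carpet_taxi. rewrite !carpet_S_val by auto. apply Rle_refl. Qed.

Definition carpet : SqMS :=
  Build_SqMS {p | K p} (carpet_taxi K) carpet_S carpet_taxi_metric carpet_taxi_bound
    carpet_S_inj carpet_S_sq1 carpet_S_sq2.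

Definition cell_point (z : Mpt * carpet) : R * R := to_cell (fst z) (proj1_sig (snd z)).

Lemma cell_point_trel z w : trel carpet z w -> cell_point z = cell_point w.
Proof.
  induction 1 as [[m x] [n y] Hzw | | |]; try congruence.
  destruct Hzw as [_ [p [q [Hp [Hq [Hz [Hw [E1 E2]]]]]]]]. simpl in *.
  unfold cell_point, to_cell; simpl. rewrite Hz, Hw, !carpet_S_val by auto.
  now f_equal.
Qed.

Definition carpet_eta (a : tens carpet) : carpet :=
  exist _ (cell_point (rep a)) (carpet_to_cell _ _ (proj2_sig (snd (rep a)))).

Lemma carpet_eta_tcls m x : proj1_sig (carpet_eta (tcls carpet m x)) = to_cell m (proj1_sig x).
Proof. simpl. symmetry. apply (cell_point_trel (m, x)), trel_rep. Qed.

Lemma carpet_eta_alg : is_alg carpet carpet_eta.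
Proof.
  split.
  - intros a b. simpl. unfold carpet_taxi, tdist; simpl.
    apply (le_qdist carpet (fun z w => taxi (cell_point z) (cell_point w))).
    + intros. rewrite taxi_refl. lra.
    + intros. apply taxi_triangle.
    + intros z w. unfold step_cost. destruct excluded_middle_informative as [h|h].
      * rewrite (cell_point_trel _ _ h), taxi_refl. lra.
      * unfold pdist. destruct Mpt_eq_dec as [e|e].
        -- unfold cell_point. rewrite e, taxi_to_cell. apply Rle_refl.
        -- apply taxi_unit_sq; apply to_cell_unit_sq, carpet_unit_sq, proj2_sig.
  - intros p m Hp Hm. apply sig_eq.
    change (3 * fst p - mx m, 3 * snd p - my m) with (from_cell m p).
    rewrite carpet_eta_tcls. simpl.
    rewrite !carpet_S_val by auto using M0_from_cell. apply to_from_cell.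
Qed.

End CarpetAlgebra.

(** * Coordinates on the initial algebra *)

Section Coordinates.
Variables (K : R * R -> Prop) (G : SqMS) (eta : tens G -> G).
Hypothesis K_carpet : is_carpet K.
Hypothesis G_initial : is_initial_algebra G eta.

Let G_alg : is_alg G eta := proj1 G_initial.

Definition carpet_mor : G -> carpet K K_carpet :=
  proj1_sig (constructive_indefinite_description _
    (proj2 G_initial _ _ (carpet_eta_alg K K_carpet))).

Lemma carpet_mor_alg_mor : is_alg_mor G (carpet K K_carpet) eta (carpet_eta K K_carpet) carpet_mor.
Proof. unfold carpet_mor. destruct (constructive_indefinite_description _ _) as [f Hf]. apply Hf. Qed.

Definition coord (x : G) : R * R := proj1_sig (carpet_mor x).

Lemma coord_short x y : taxi (coord x) (coord y) <= sq_d G x y.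
Proof. apply carpet_mor_alg_mor. Qed.

Lemma coord_carpet x : K (coord x).
Proof. apply (proj2_sig (carpet_mor x)). Qed.

Lemma coord_unit_sq x : unit_sq (coord x).
Proof. apply (carpet_unit_sq K K_carpet), coord_carpet. Qed.

Lemma coord_eta m x : coord (eta (tcls G m x)) = to_cell m (coord x).
Proof. unfold coord. rewrite (proj2 carpet_mor_alg_mor). apply carpet_eta_tcls. Qed.

Lemma coord_dense b eps : K b -> 0 < eps -> exists x, taxi (coord x) b < eps.
Proof.
  intros Hb Heps.
  assert (Himage_nonempty : exists p, exists x, coord x = p)
    by (exists (coord (sq_S G (0, 0))); eauto).
  destruct (self_similar_dense K (fun p => exists x, coord x = p)
              (carpet_self_similar K K_carpet)) with (a := b) (eps := eps)
    as [p [[x <-] Hx]]; eauto.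
  - intros p [x <-]. apply coord_unit_sq.
  - intros m p [x <-]. exists (eta (tcls G m x)). apply coord_eta.
Qed.

Fixpoint eta_word (w : list Mpt) (z : G) : G :=
  match w with nil => z | m :: w' => eta (tcls G m (eta_word w' z)) end.

Fixpoint word_cell (w : list Mpt) (a : R * R) : R * R :=
  match w with nil => a | m :: w' => to_cell m (word_cell w' a) end.

Lemma coord_eta_word w z : coord (eta_word w z) = word_cell w (coord z).
Proof. induction w as [|m w IH]; simpl; auto. now rewrite coord_eta, IH. Qed.

Lemma word_cell_unit_sq w a : unit_sq a -> unit_sq (word_cell w a).
Proof. induction w; simpl; auto using to_cell_unit_sq. Qed.

Lemma eta_word_dist w z1 z2 :
  sq_d G (eta_word w z1) (eta_word w z2) <= sq_d G z1 z2 / 3 ^ length w.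
Proof.
  induction w as [|m w IH]; simpl. lra.
  eapply Rle_trans. apply G_alg.
  eapply Rle_trans. apply tdist_tcls_same.
  pose proof (pow3_pos (length w)).
  replace (sq_d G z1 z2 / (3 * 3 ^ length w)) with (sq_d G z1 z2 / 3 ^ length w / 3)
    by (field; lra).
  lra.
Qed.

Lemma eta_word_S w u : inM0 u -> inM0 (word_cell w u) ->
  eta_word w (sq_S G u) = sq_S G (word_cell w u).
Proof.
  induction w as [|m w IH]; simpl; intros Hu Hw; auto.
  assert (Hsq : unit_sq (word_cell w u)) by auto using word_cell_unit_sq, M0_unit_sq.
  rewrite IH by eauto using M0_of_to_cell.
  rewrite <- (from_to_cell m (word_cell w u)) at 1.
  apply G_alg; auto using to_cell_in_sub.
Qed.

Lemma tgen_of_to_cell m n u v : adjacent m n -> inM0 u -> inM0 v ->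
  to_cell m u = to_cell n v -> tgen G (m, sq_S G u) (n, sq_S G v).
Proof.
  intros Ha Hu Hv E. unfold to_cell in E. injection E; intros.
  split; auto. exists u, v. simpl. tauto.
Qed.

Ltac adjacent_cells :=
  unfold adjacent; simpl;
  first [left; split; [lra | rabs] | right; split; [lra | rabs]].

(* Diagonally placed cells (such as M01 and M10) are not adjacent: their
   common corner is reached through the corner cell c adjacent to both. *)
Ltac glue_through c :=
  match goal with |- trel G (?m, sq_S G ?u) _ =>
    apply rst_trans with (y := (c, sq_S G (from_cell c (to_cell m u))));
    apply rst_step; apply tgen_of_to_cell;
    first [ adjacent_cells | assumption
          | unfold from_cell, to_cell, inM0; simpl; solve_M0
          | now rewrite to_from_cell ]
  end.

Lemma trel_boundary m m' u u' : m <> m' -> inM0 u -> inM0 u' ->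
  to_cell m u = to_cell m' u' -> trel G (m, sq_S G u) (m', sq_S G u').
Proof.
  intros Hm Hu Hu' E.
  pose proof (M0_unit_sq _ Hu) as [Hu1 Hu2]. pose proof (M0_unit_sq _ Hu') as [Hu1' Hu2'].
  pose proof E as E'. unfold to_cell in E'. injection E'; intros E2 E1.
  destruct m, m'; try congruence; simpl in E1, E2; try (exfalso; lra);
  first [ apply rst_step, tgen_of_to_cell; auto; adjacent_cells
        | solve [glue_through M00] | solve [glue_through M02]
        | solve [glue_through M20] | solve [glue_through M22] ].
Qed.

Lemma eta_word_S_eq w : forall w' u u', inM0 u -> inM0 u' ->
  word_cell w u = word_cell w' u' -> eta_word w (sq_S G u) = eta_word w' (sq_S G u').
Proof.
  induction w as [|m w IH]; intros w' u u' Hu Hu' E.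
  - simpl in E |- *. rewrite (eta_word_S w' u'); congruence.
  - destruct w' as [|m' w'].
    + simpl in E. rewrite (eta_word_S (m :: w) u); simpl; congruence.
    + simpl in E |- *. destruct (Mpt_eq_dec m m') as [<-|Hm].
      * apply to_cell_inj in E. now rewrite (IH w' u u').
      * destruct (M0_of_to_cell_eq m m' _ _ Hm
                    (word_cell_unit_sq w u (M0_unit_sq u Hu))
                    (word_cell_unit_sq w' u' (M0_unit_sq u' Hu')) E).
        rewrite (eta_word_S w u), (eta_word_S w' u') by auto.
        apply f_equal, tcls_eq, trel_boundary; auto.
Qed.

Lemma eta_word_decomp k x : exists w z, length w = k /\ x = eta_word w z.
Proof.
  revert x; induction k as [|k IH]; intros x. now exists nil, x.
  destruct (eta_surjective G eta G_initial x) as [m [z0 ->]].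
  destruct (IH z0) as [w [z [Hl ->]]]. now exists (m :: w), z; subst.
Qed.

Definition mx_nat (m : Mpt) : nat := match m with M00 | M01 | M02 => 0 | M10 | M12 => 1 | _ => 2 end.
Definition my_nat (m : Mpt) : nat := match m with M00 | M10 | M20 => 0 | M01 | M21 => 1 | _ => 2 end.

Fixpoint word_x (w : list Mpt) : nat :=
  match w with nil => 0 | m :: w' => mx_nat m * 3 ^ length w' + word_x w' end.
Fixpoint word_y (w : list Mpt) : nat :=
  match w with nil => 0 | m :: w' => my_nat m * 3 ^ length w' + word_y w' end.

Lemma word_cell_eq w a : word_cell w a =
  ((INR (word_x w) + fst a) / 3 ^ length w, (INR (word_y w) + snd a) / 3 ^ length w).
Proof.
  induction w as [|m w IH]; simpl. destruct a; simpl; f_equal; field.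
  rewrite IH. unfold to_cell; simpl.
  rewrite !plus_INR, !mult_INR, !pow_INR. pose proof (pow3_pos (length w)).
  replace (INR 3) with 3 by (simpl; lra).
  destruct m; simpl; f_equal; field; lra.
Qed.

Lemma Rabs_div_lt x y n : 0 < n -> Rabs (x / n - y / n) < / n -> Rabs (x - y) < 1.
Proof.
  intros Hn H. replace (x / n - y / n) with ((x - y) * / n) in H by (field; lra).
  rewrite Rabs_mult, Rabs_inv, (Rabs_pos_eq n) in H by lra.
  apply (Rmult_lt_reg_r (/ n)). now apply Rinv_0_lt_compat. lra.
Qed.

Lemma nat_close (i j : nat) (a b : R) : 0 <= a <= 1 -> 0 <= b <= 1 ->
  Rabs (INR i + a - (INR j + b)) < 1 -> (i <= j + 1 /\ j <= i + 1)%nat.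
Proof.
  intros Ha Hb H. apply Rabs_def2 in H.
  assert (INR i < INR (j + 2)) by (rewrite plus_INR; simpl; lra).
  assert (INR j < INR (i + 2)) by (rewrite plus_INR; simpl; lra).
  apply INR_lt in H0. apply INR_lt in H1. lia.
Qed.

Lemma M0_corner i j : (i <= 1)%nat -> (j <= 1)%nat -> inM0 (INR i, INR j).
Proof.
  intros Hi Hj. unfold inM0; simpl.
  destruct i as [|[|]], j as [|[|]]; try lia; simpl; solve_M0.
Qed.

Lemma common_corner w w' a b : length w = length w' -> unit_sq a -> unit_sq b ->
  taxi (word_cell w a) (word_cell w' b) < / 3 ^ length w ->
  exists u u', inM0 u /\ inM0 u' /\ word_cell w u = word_cell w' u'.
Proof.
  intros Hlen [Ha1 Ha2] [Hb1 Hb2] Hclose.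
  pose proof (pow3_pos (length w)) as Hpos.
  pose proof (Rle_lt_trans _ _ _ (taxi_fst _ _) Hclose) as Hx.
  pose proof (Rle_lt_trans _ _ _ (taxi_snd _ _) Hclose) as Hy.
  rewrite !word_cell_eq, <- Hlen in Hx, Hy. simpl in Hx, Hy.
  apply Rabs_div_lt in Hx, Hy; auto.
  destruct (nat_close _ _ _ _ Ha1 Hb1 Hx), (nat_close _ _ _ _ Ha2 Hb2 Hy).
  set (cx := Nat.max (word_x w) (word_x w')). set (cy := Nat.max (word_y w) (word_y w')).
  exists (INR (cx - word_x w), INR (cy - word_y w)), (INR (cx - word_x w'), INR (cy - word_y w')).
  split; [|split]; try (apply M0_corner; lia).
  assert (Ex : (word_x w + (cx - word_x w) = word_x w' + (cx - word_x w'))%nat) by lia.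
  assert (Ey : (word_y w + (cy - word_y w) = word_y w' + (cy - word_y w'))%nat) by lia.
  rewrite !word_cell_eq, <- Hlen. simpl. now rewrite <- !plus_INR, Ex, Ey.
Qed.

Lemma dist_le_of_coord_close k x y :
  taxi (coord x) (coord y) < / 3 ^ k -> sq_d G x y <= 4 / 3 ^ k.
Proof.
  intros Hclose.
  destruct (eta_word_decomp k x) as [w [z [Hw ->]]], (eta_word_decomp k y) as [w' [z' [Hw' ->]]].
  rewrite !coord_eta_word, <- Hw in Hclose.
  destruct (common_corner w w' (coord z) (coord z')) as [u [u' [Hu [Hu' Hcorner]]]];
    auto using coord_unit_sq; try congruence.
  pose proof (sq_d_triangle G (eta_word w z) (eta_word w (sq_S G u)) (eta_word w' z')).
  pose proof (eta_word_dist w z (sq_S G u)). pose proof (eta_word_dist w' (sq_S G u') z').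
  rewrite (eta_word_S_eq w w' u u' Hu Hu' Hcorner) in *.
  pose proof (sq_bound G z (sq_S G u)). pose proof (sq_bound G (sq_S G u') z').
  rewrite Hw in *. rewrite Hw' in *.
  assert (0 < / 3 ^ k) by apply Rinv_0_lt_compat, pow3_pos.
  unfold Rdiv in *. nra.
Qed.

Lemma le_12_of_triadic (d t : R) : 0 <= t -> d <= 2 ->
  (forall k, t < / 3 ^ k -> d <= 4 / 3 ^ k) -> d <= 12 * t.
Proof.
  intros Ht Hd Htri.
  destruct (Rle_lt_dec 1 t) as [|Ht1]; [lra|].
  destruct (Rle_lt_or_eq_dec 0 t Ht) as [Htpos | <-].
  - destruct (pow3_small 1 t Htpos) as [N HN]. unfold Rdiv in HN. rewrite Rmult_1_l in HN.
    assert (Hk : exists k, / 3 ^ S k <= t /\ t < / 3 ^ k).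
    { assert (HN' : / 3 ^ N <= t) by lra. clear Htri HN.
      induction N as [|N IH]. simpl in HN'. lra.
      destruct (Rlt_le_dec t (/ 3 ^ N)); [now exists N | auto]. }
    destruct Hk as [k [Hk1 Hk2]]. specialize (Htri k Hk2).
    simpl in Hk1. rewrite Rinv_mult in Hk1. lra.
  - destruct (Rle_lt_dec d 0); [lra|].
    destruct (pow3_small 4 d) as [k Hk]; auto.
    specialize (Htri k). pose proof (pow3_pos k).
    assert (0 < / 3 ^ k) by (apply Rinv_0_lt_compat; lra). lra.
Qed.

Lemma dist_le_coord x y : sq_d G x y <= 12 * taxi (coord x) (coord y).
Proof.
  apply le_12_of_triadic; auto using taxi_ge0, sq_bound.
  intros k. apply dist_le_of_coord_close.
Qed.

End Coordinates.

(** * Extension to the completion *)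

Lemma is_lim_seq_real u : ex_finite_lim_seq u -> is_lim_seq u (real (Lim_seq u)).
Proof. intros [l Hl]. now rewrite (is_lim_seq_unique _ _ Hl). Qed.

Lemma is_lim_seq_of_abs_le (u e : nat -> R) l : is_lim_seq e 0 ->
  (forall n, Rabs (u n - l) <= e n) -> is_lim_seq u l.
Proof.
  intros He Hle.
  apply (is_lim_seq_le_le (fun n => l - e n) u (fun n => l + e n)).
  - intros n. specialize (Hle n). apply Rabs_le_between in Hle. lra.
  - replace (Finite l) with (Rbar_minus l 0) by (simpl; f_equal; ring).
    apply is_lim_seq_minus'; auto using is_lim_seq_const.
  - replace (Finite l) with (Rbar_plus l 0) by (simpl; f_equal; ring).
    apply is_lim_seq_plus'; auto using is_lim_seq_const.
Qed.

Section CompletionExtension.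
Variables (X : SqMS) (K : R * R -> Prop) (f : X -> R * R) (C : R).
Hypothesis C_ge1 : 1 <= C.
Hypothesis K_closed : forall b, (forall eps, 0 < eps -> exists q, K q /\ taxi q b < eps) -> K b.
Hypothesis f_K : forall x, K (f x).
Hypothesis f_lower : forall x y, taxi (f x) (f y) <= sq_d X x y.
Hypothesis f_upper : forall x y, sq_d X x y <= C * taxi (f x) (f y).
Hypothesis f_dense : forall b eps, K b -> 0 < eps -> exists x, taxi (f x) b < eps.

Lemma cequiv_equiv : equivalence _ (cequiv X).
Proof.
  unfold cequiv. split.
  - intros s. eapply is_lim_seq_ext; [|apply is_lim_seq_const].
    intros; simpl. symmetry; apply sq_d_refl.
  - intros s t u Hst Htu.
    apply (is_lim_seq_le_le (fun _ => 0) _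
      (fun n => sq_d X (proj1_sig s n) (proj1_sig t n) + sq_d X (proj1_sig t n) (proj1_sig u n))).
    + intros n. split. apply sq_d_ge0. apply sq_d_triangle.
    + apply is_lim_seq_const.
    + replace (Finite 0) with (Rbar_plus 0 0) by (simpl; f_equal; ring).
      now apply is_lim_seq_plus'.
  - intros s t. apply is_lim_seq_ext. intros; apply sq_d_sym.
Qed.

Lemma dist_ex_lim (s t : CSeq X) :
  ex_finite_lim_seq (fun n => sq_d X (proj1_sig s n) (proj1_sig t n)).
Proof.
  apply ex_lim_seq_cauchy_corr. intros eps.
  assert (He2 : 0 < eps / 2) by (pose proof (cond_pos eps); lra).
  destruct (proj2_sig s _ He2) as [N1 H1], (proj2_sig t _ He2) as [N2 H2].
  exists (Nat.max N1 N2). intros n m Hn Hm.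
  specialize (H1 n m ltac:(lia) ltac:(lia)). specialize (H2 n m ltac:(lia) ltac:(lia)).
  pose proof (sq_d_triangle X (proj1_sig s n) (proj1_sig s m) (proj1_sig t n)).
  pose proof (sq_d_triangle X (proj1_sig s m) (proj1_sig t m) (proj1_sig t n)).
  pose proof (sq_d_triangle X (proj1_sig s m) (proj1_sig s n) (proj1_sig t m)).
  pose proof (sq_d_triangle X (proj1_sig s n) (proj1_sig t n) (proj1_sig t m)).
  rewrite (sq_d_sym X (proj1_sig t m) (proj1_sig t n)), (sq_d_sym X (proj1_sig s m) (proj1_sig s n)) in *.
  apply Rabs_lt_between'. lra.
Qed.

Lemma proj_ex_lim (pr : R * R -> R) (s : CSeq X) :
  (forall p q, Rabs (pr p - pr q) <= taxi p q) ->
  ex_finite_lim_seq (fun n => pr (f (proj1_sig s n))).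
Proof.
  intros Hpr. apply ex_lim_seq_cauchy_corr. intros eps.
  destruct (proj2_sig s eps (cond_pos eps)) as [N HN]. exists N. intros n m Hn Hm.
  eapply Rle_lt_trans. apply Hpr. eapply Rle_lt_trans. apply f_lower. auto.
Qed.

Definition lim_f (s : CSeq X) : R * R :=
  (real (Lim_seq (fun n => fst (f (proj1_sig s n)))),
   real (Lim_seq (fun n => snd (f (proj1_sig s n))))).

Lemma lim_f_fst s : is_lim_seq (fun n => fst (f (proj1_sig s n))) (fst (lim_f s)).
Proof. apply is_lim_seq_real, proj_ex_lim, taxi_fst. Qed.

Lemma lim_f_snd s : is_lim_seq (fun n => snd (f (proj1_sig s n))) (snd (lim_f s)).
Proof. apply is_lim_seq_real, proj_ex_lim, taxi_snd. Qed.

Lemma taxi_lim_f s t :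
  is_lim_seq (fun n => taxi (f (proj1_sig s n)) (f (proj1_sig t n))) (taxi (lim_f s) (lim_f t)).
Proof.
  unfold taxi.
  pose proof (is_lim_seq_abs _ _ (is_lim_seq_minus' _ _ _ _ (lim_f_fst s) (lim_f_fst t))).
  pose proof (is_lim_seq_abs _ _ (is_lim_seq_minus' _ _ _ _ (lim_f_snd s) (lim_f_snd t))).
  now apply (is_lim_seq_plus' _ _ (Rabs (fst (lim_f s) - fst (lim_f t)))).
Qed.

Lemma lim_dist_bounds s t :
  let D := real (Lim_seq (fun n => sq_d X (proj1_sig s n) (proj1_sig t n))) in
  taxi (lim_f s) (lim_f t) <= D <= C * taxi (lim_f s) (lim_f t).
Proof.
  pose proof (is_lim_seq_real _ (dist_ex_lim s t)) as HD.
  split.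
  - apply (is_lim_seq_le _ _ _ _ (fun n => f_lower _ _) (taxi_lim_f s t) HD).
  - apply (is_lim_seq_le _ _ _ _ (fun n => f_upper _ _) HD (is_lim_seq_scal_l _ C _ (taxi_lim_f s t))).
Qed.

Lemma lim_f_K s : K (lim_f s).
Proof.
  apply K_closed. intros eps He.
  assert (He2 : 0 < eps / 2) by lra.
  destruct (proj2 (is_lim_seq_spec _ _) (lim_f_fst s) (mkposreal _ He2)) as [N1 H1].
  destruct (proj2 (is_lim_seq_spec _ _) (lim_f_snd s) (mkposreal _ He2)) as [N2 H2].
  simpl pos in H1, H2.
  exists (f (proj1_sig s (Nat.max N1 N2))). split; auto.
  specialize (H1 (Nat.max N1 N2) ltac:(lia)). specialize (H2 (Nat.max N1 N2) ltac:(lia)).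
  unfold taxi. lra.
Qed.

Lemma lim_f_cequiv s t : cequiv X s t -> lim_f s = lim_f t.
Proof.
  intros Hst. apply taxi_eq0, Rle_antisym; [|apply taxi_ge0].
  apply (is_lim_seq_le _ _ _ _ (fun n => f_lower _ _) (taxi_lim_f s t) Hst).
Qed.

Lemma lim_f_of_taxi s b :
  is_lim_seq (fun n => taxi (f (proj1_sig s n)) b) 0 -> lim_f s = b.
Proof.
  intros Hb.
  assert (Hx : is_lim_seq (fun n => fst (f (proj1_sig s n))) (fst b))
    by (apply (is_lim_seq_of_abs_le _ _ _ Hb); intros; apply taxi_fst).
  assert (Hy : is_lim_seq (fun n => snd (f (proj1_sig s n))) (snd b))
    by (apply (is_lim_seq_of_abs_le _ _ _ Hb); intros; apply taxi_snd).
  unfold lim_f. rewrite (is_lim_seq_unique _ _ Hx), (is_lim_seq_unique _ _ Hy).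
  destruct b; reflexivity.
Qed.

Lemma cauchy_of_taxi_lim (x : nat -> X) b :
  is_lim_seq (fun n => taxi (f (x n)) b) 0 -> Defs.cauchy X x.
Proof.
  intros Hb eps He.
  assert (Hpos : 0 < eps / (2 * C)) by (apply Rdiv_lt_0_compat; lra).
  destruct (proj2 (is_lim_seq_spec _ _) Hb (mkposreal _ Hpos)) as [N HN]. simpl pos in HN.
  exists N. intros i j Hi Hj.
  specialize (HN i Hi) as Hxi. specialize (HN j Hj) as Hxj.
  rewrite Rminus_0_r, Rabs_pos_eq in Hxi, Hxj by apply taxi_ge0.
  pose proof (taxi_triangle (f (x i)) b (f (x j))). rewrite (taxi_sym b) in H.
  eapply Rle_lt_trans. apply f_upper.
  replace eps with (C * (eps / (2 * C) + eps / (2 * C))) by (field; lra).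
  apply Rmult_lt_compat_l; lra.
Qed.

Definition ext (a : compl X) : {p | K p} := exist _ (lim_f (rep a)) (lim_f_K (rep a)).

Lemma ext_injective a b : ext a = ext b -> a = b.
Proof.
  intros E. apply (f_equal (@proj1_sig _ _)) in E. simpl in E.
  pose proof (lim_dist_bounds (rep a) (rep b)) as Hb. simpl in Hb.
  rewrite E, taxi_refl in Hb.
  rewrite (cls_rep _ a), (cls_rep _ b). apply cls_eq; [apply cequiv_equiv|].
  pose proof (is_lim_seq_real _ (dist_ex_lim (rep a) (rep b))) as HD.
  assert (HL : real (Lim_seq (fun n => sq_d X (proj1_sig (rep a) n) (proj1_sig (rep b) n))) = 0)
    by lra.
  rewrite HL in HD. exact HD.
Qed.

Lemma ext_surjective b : exists a, ext a = b.
Proof.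
  destruct b as [b Hb].
  assert (Hthird : 0 < / 3) by (apply Rinv_0_lt_compat; lra).
  assert (Hseq : exists x : nat -> X, forall n, taxi (f (x n)) b < (/ 3) ^ n).
  { exists (fun n => proj1_sig (constructive_indefinite_description _
                     (f_dense b _ Hb (pow_lt _ n Hthird)))).
    intros n. destruct (constructive_indefinite_description _ _); auto. }
  destruct Hseq as [x Hx].
  assert (Hlim : is_lim_seq (fun n => taxi (f (x n)) b) 0).
  { apply (is_lim_seq_le_le (fun _ => 0) _ (fun n => (/ 3) ^ n)).
    - intros n. split. apply taxi_ge0. now apply Rlt_le.
    - apply is_lim_seq_const.
    - apply is_lim_seq_geom. rewrite Rabs_pos_eq by lra. lra. }
  set (s := exist _ x (cauchy_of_taxi_lim x b Hlim) : CSeq X).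
  exists (cls (cequiv X) s). apply sig_eq. simpl.
  rewrite <- (lim_f_cequiv s) by apply (rep_cls _ cequiv_equiv).
  now apply lim_f_of_taxi.
Qed.

Theorem completion_bilipschitz : bilipschitz (cdist X) (carpet_taxi K).
Proof.
  exists ext, C. repeat split; auto using ext_injective, ext_surjective.
  - pose proof (lim_dist_bounds (rep x) (rep y)) as Hb. unfold cdist, carpet_taxi.
    simpl in Hb |- *. apply (Rmult_le_reg_l C); [lra|]. rewrite <- Rmult_assoc, Rinv_r, Rmult_1_l by lra. lra.
  - pose proof (lim_dist_bounds (rep x) (rep y)) as Hb. unfold cdist, carpet_taxi.
    simpl in Hb |- *. pose proof (taxi_ge0 (lim_f (rep x)) (lim_f (rep y))). nra.
Qed.

End CompletionExtension.

Lemma bilipschitz_taxi_eucl {A} (dA : A -> A -> R) (K : R * R -> Prop) :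
  bilipschitz dA (carpet_taxi K) -> bilipschitz dA (carpet_eucl K).
Proof.
  intros [f [L [HL [Hinj [Hsurj Hbounds]]]]].
  exists f, (2 * L). repeat split; auto; try lra; specialize (Hbounds x y) as [Hlo Hhi];
    unfold carpet_taxi, carpet_eucl in *;
    pose proof (eucl_le_taxi (proj1_sig (f x)) (proj1_sig (f y)));
    pose proof (taxi_le_eucl (proj1_sig (f x)) (proj1_sig (f y)));
    pose proof (taxi_ge0 (proj1_sig (f x)) (proj1_sig (f y))).
  - rewrite Rinv_mult. lra.
  - lra.
Qed.

Theorem mainTheorem1 :
  forall (G : SqMS) (eta : tens G -> G),
    is_initial_algebra G eta ->
    forall K : R * R -> Prop, is_carpet K ->
      bilipschitz (cdist G) (carpet_taxi K) /\
      bilipschitz (cdist G) (carpet_eucl K).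
Proof.
  intros G eta G_initial K K_carpet.
  assert (Htaxi : bilipschitz (cdist G) (carpet_taxi K)).
  { apply (completion_bilipschitz G K (coord K G eta K_carpet G_initial) 12); try lra.
    - apply carpet_closed, K_carpet.
    - apply coord_carpet.
    - apply coord_short.
    - apply dist_le_coord.
    - intros b eps. apply coord_dense. }
  split; auto using bilipschitz_taxi_eucl.
Qed.
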